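(* Let $n\ge 3$. Let $\pi$ be a permutation of $\{1,\dots,n\}$ containing the pattern $321$ exactly once, and let $c>b>a$ be the values of that unique occurrence, so that $\pi$ can be written as the concatenation $\pi=\pi_1\, c\, \pi_2\, b\, \pi_3\, a\, \pi_4$ of (possibly empty) words $\pi_1,\pi_2,\pi_3,\pi_4$ and the letters $c,b,a$. Then every entry of $\pi$ to the left of $b$ other than $c$ is smaller than $b$, and every entry to the right of $b$ other than $a$ is larger than $b$. Consequently $\sigma_1:=\pi_1\, b\, \pi_2\, a$ is a $321$-avoiding permutation of $\{1,\dots,b\}$ whose last letter is not $b$, and $\sigma_2:=c\,\pi_3\, b\,\pi_4$ is a $321$-avoiding permutation of $\{b,\dots,n\}$ whose first letter is not $b$. Moreover, the map $\pi\mapsto(b,\sigma_1,\sigma_2)$ is a bijection from the set of permutations of $\{1,\dots,n\}$ containing $321$ exactly once onto the set of triples $(b,\sigma_1,\sigma_2)$ with $2\le b\le n-1$, $\sigma_1$ a $321$-avoiding permutation of $\{1,\dots,b\}$ not ending with $b$, and $\sigma_2$ a $321$-avoiding permutation of $\{b,\dots,n\}$ not starting with $b$.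
   Context: Permutations are written in one-line notation as words; a permutation of a finite set of integers $S$ is a word using each element of $S$ exactly once. Such a word $w=w_1\cdots w_m$ contains an occurrence of the pattern $321$ if there are positions $i<j<k$ with $w_i>w_j>w_k$; it is $321$-avoiding if there is no such triple; it contains $321$ exactly once if there is exactly one such triple of positions. *)

(* Permutations are words (seq nat); positions are 0-based. *)
From mathcomp Require Import all_boot.
Set Implicit Arguments. Unset Strict Implicit. Unset Printing Implicit Defensive.

Definition occ321 (w : seq nat) : seq (nat * nat * nat) :=
  [seq t <- flatten [seq flatten [seq [seq (i, j, k) | k <- iota 0 (size w)]
                                  | j <- iota 0 (size w)]
                    | i <- iota 0 (size w)]
   | [&& t.1.1 < t.1.2, t.1.2 < t.2,
         nth 0 w t.1.2 < nth 0 w t.1.1 & nth 0 w t.2 < nth 0 w t.1.2]].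

Definition avoids321 (w : seq nat) : bool := occ321 w == [::].
Definition once321 (w : seq nat) : bool := size (occ321 w) == 1.

Definition slice (w : seq nat) (m p : nat) : seq nat := take (p - m) (drop m w).

(* pi = pi1 c pi2 b pi3 a pi4 with c,b,a at positions i,j,k *)
(* sigma1 = pi1 b pi2 a *)
Definition sigma1 (pi : seq nat) (i j k : nat) : seq nat :=
  take i pi ++ [:: nth 0 pi j] ++ slice pi i.+1 j ++ [:: nth 0 pi k].
(* sigma2 = c pi3 b pi4 *)
Definition sigma2 (pi : seq nat) (i j k : nat) : seq nat :=
  [:: nth 0 pi i] ++ slice pi j.+1 k ++ [:: nth 0 pi j] ++ drop k.+1 pi.

(* The map pi |-> (b, sigma1, sigma2), read off from the (first, and for
   pi containing 321 exactly once, unique) occurrence of 321. *)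
Definition phi (pi : seq nat) : nat * seq nat * seq nat :=
  let: (i, j, k) := head (0, 0, 0) (occ321 pi) in
  (nth 0 pi j, sigma1 pi i j k, sigma2 pi i j k).

Definition once321_perm (n : nat) (pi : seq nat) : Prop :=
  perm_eq pi (iota 1 n) /\ once321 pi.

Definition triple_ok (n : nat) (t : nat * seq nat * seq nat) : Prop :=
  let: (b, s1, s2) := t in
  [/\ 2 <= b <= n - 1,
      [/\ perm_eq s1 (iota 1 b), avoids321 s1 & last 0 s1 != b]
    & [/\ perm_eq s2 (iota b (n - b + 1)), avoids321 s2 & head 0 s2 != b]].

From mathcomp Require Import all_boot zify.
Set Implicit Arguments. Unset Strict Implicit. Unset Printing Implicit Defensive.

(* If pi has the single occurrence (c, b, a), then cutting pi at the three
   positions writes it as the glue word  pi1 c pi2 b pi3 a pi4.  The heart of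
   the proof concerns glue words W with all of pi1, pi2, a below b and all of
   c, pi3, pi4 above b.  Then sigma1 = pi1 b pi2 a is obtained from W by
   swapping the values b, c and keeping the letters <= b, and sigma2 =
   c pi3 b pi4 by swapping a, b and keeping the letters >= b.  Filtering and
   relabelling by an involution transport subsequence patterns, which gives
   [avoid_of_unique] and [unique_of_avoid]: (c, b, a) is the only 321 of W
   iff sigma1 and sigma2 avoid 321.  The second direction also classifies the
   letters of W into three regions (before b, b itself, after b), which can
   only increase along a subsequence. *)

Definition pat321 (w : seq nat) (x y z : nat) : bool :=
  [&& z < y, y < x & subseq [:: x; y; z] w].

Definition glue (p1 p2 p3 p4 : seq nat) (c b a : nat) : seq nat :=
  p1 ++ c :: p2 ++ b :: p3 ++ a :: p4.

Definition left_word (p1 p2 : seq nat) (b a : nat) : seq nat :=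
  p1 ++ b :: p2 ++ [:: a].

Definition right_word (p3 p4 : seq nat) (c b : nat) : seq nat :=
  c :: p3 ++ b :: p4.

Definition transp (T : eqType) (u v x : T) : T :=
  if x == u then v else if x == v then u else x.

Lemma flatten_uniq_key (S T : eqType) (key : T -> S) (F : S -> seq T) (s : seq S) :
  uniq s -> {in s, forall x, uniq (F x)} -> (forall x t, t \in F x -> key t = x) ->
  uniq (flatten [seq F x | x <- s]).
Proof.
move=> + uF keyF; elim: s uF => //= x s IHs uF /andP[xNs us].
rewrite cat_uniq uF ?mem_head //= IHs ?andbT // => [|y ys]; last first.
  by apply: uF; rewrite inE ys orbT.
apply/hasPn => t /flatten_mapP[y ys tFy]; apply: contra xNs => tFx.
by rewrite -(keyF _ _ tFx) (keyF _ _ tFy).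
Qed.

Lemma pivot_notin (T : eqType) (s1 s2 : seq T) x : uniq (s1 ++ x :: s2) -> x \notin s1 ++ s2.
Proof. by rewrite uniq_catC /= mem_cat orbC -mem_cat => /andP[]. Qed.

Lemma subseq_cons_cat (T : eqType) (x : T) s u v :
  subseq s v -> subseq (x :: s) (u ++ x :: v).
Proof. by move=> sv; apply: subseq_trans (suffix_subseq u _); rewrite /= eqxx. Qed.

Lemma subseq_pair_suffix (T : eqType) (u v : seq T) x y : uniq (u ++ v) ->
  subseq [:: x; y] (u ++ v) -> x \in v -> y \in v /\ y \notin u.
Proof.
move=> uuv sxy xv; case/splitPr: xv uuv sxy => v1 v2 uuv sxy.
have yv : y \in v1 ++ x :: v2.
  move: uuv sxy; rewrite catA => uuv.
  rewrite (uniq_subseq_pivot [::] [:: y] uuv) sub1seq mem_cat inE.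
  by case/andP=> _ ->; rewrite !orbT.
by split => //; move: uuv; rewrite cat_uniq => /and3P[_ /hasPn/(_ y yv)].
Qed.

Lemma subseq_filter_map (T : eqType) (f : T -> T) (P : pred T) (s w : seq T) :
  involutive f -> subseq s (filter P (map f w)) = all P s && subseq (map f s) w.
Proof.
move=> fK; rewrite subseq_filter; congr (_ && _).
by apply/idP/idP => /(map_subseq f); rewrite ?(mapK fK).
Qed.

Lemma filter_in_all (T : eqType) (P : pred T) (s : seq T) :
  {in s, forall v, P v} -> filter P s = s.
Proof. by move=> Ps; rewrite (eq_in_filter (a2 := predT)) ?filter_predT // => v /Ps ->. Qed.

Lemma filter_in_none (T : eqType) (P : pred T) (s : seq T) :
  {in s, forall v, ~~ P v} -> filter P s = [::].
Proof. by move=> nPs; rewrite (eq_in_filter (a2 := pred0)) ?filter_pred0 // => v /nPs/negbTE. Qed.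

Lemma transpK (T : eqType) (u v : T) : involutive (transp u v).
Proof. by move=> x; rewrite /transp; do ![case: eqP => //=] => *; subst. Qed.

Lemma transp_id (T : eqType) (u v x : T) : x != u -> x != v -> transp u v x = x.
Proof. by rewrite /transp => /negbTE-> /negbTE->. Qed.

Lemma transpL (T : eqType) (u v : T) : transp u v u = v.
Proof. by rewrite /transp eqxx. Qed.

Lemma transpR (T : eqType) (u v : T) : transp u v v = u.
Proof. by rewrite /transp eqxx; case: eqP. Qed.

Lemma mem_map_transp (T : eqType) (u v : T) s x : u \in s -> v \in s ->
  (x \in map (transp u v) s) = (x \in s).
Proof.
move=> us vs; rewrite -{1}(transpK u v x) mem_map; last exact: can_inj (transpK u v).
by rewrite /transp; case: (x =P u) => [->|_]; [|case: (x =P v) => [->|]]; rewrite ?us ?vs.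
Qed.

Lemma occ321_uniq (w : seq nat) : uniq (occ321 w).
Proof.
apply: filter_uniq; apply: (@flatten_uniq_key _ _ (fun t => t.1.1)).
- exact: iota_uniq.
- move=> i _; apply: (@flatten_uniq_key _ _ (fun t => t.1.2)).
  + exact: iota_uniq.
  + by move=> j _; rewrite map_inj_uniq ?iota_uniq // => k k' [].
  + by move=> j t /mapP[k _ ->].
- by move=> i t /flatten_mapP[j _ /mapP[k _ ->]].
Qed.

Lemma occP (w : seq nat) i j k : ((i, j, k) \in occ321 w) =
  [&& i < j, j < k, k < size w, nth 0 w j < nth 0 w i & nth 0 w k < nth 0 w j].
Proof.
rewrite mem_filter /=.
have -> : (i, j, k) \in flatten [seq flatten [seq [seq (i, j, k) | k <- iota 0 (size w)]
    | j <- iota 0 (size w)] | i <- iota 0 (size w)] = [&& i < size w, j < size w & k < size w].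
  apply/flatten_mapP/and3P => [[i' + /flatten_mapP[j' + /mapP[k' + [-> -> ->]]]] | [? ? ?]].
    by rewrite !mem_iota.
  exists i; first by rewrite mem_iota.
  by apply/flatten_mapP; exists j; rewrite ?mem_iota //; apply/mapP; exists k; rewrite ?mem_iota.
apply/andP/and5P => [[/and4P[? ? ? ?] /and3P[? ? ?]] | [? ? ? ? ?]]; first by split.
by split; [apply/and4P | apply/and3P; split => //; lia].
Qed.

Lemma drop_slice (w : seq nat) m p : m <= p -> p < size w ->
  drop m w = slice w m p ++ nth 0 w p :: drop p.+1 w.
Proof.
move=> mp pw; rewrite /slice -(drop_nth 0 pw).
by rewrite -{2}(subnK mp) -drop_drop cat_take_drop.
Qed.

Lemma glue_cut (w : seq nat) i j k : i < j -> j < k -> k < size w ->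
  w = glue (take i w) (slice w i.+1 j) (slice w j.+1 k) (drop k.+1 w)
           (nth 0 w i) (nth 0 w j) (nth 0 w k).
Proof.
move=> ij jk kw.
rewrite /glue -(drop_slice jk kw) -(drop_slice ij (ltn_trans jk kw)).
by rewrite -drop_nth ?cat_take_drop //; lia.
Qed.

Lemma subseq_glue p1 p2 p3 p4 c b a : subseq [:: c; b; a] (glue p1 p2 p3 p4 c b a).
Proof. by rewrite /glue; do 3!apply: subseq_cons_cat; apply: sub0seq. Qed.

Lemma occ_pat (w : seq nat) i j k : (i, j, k) \in occ321 w ->
  pat321 w (nth 0 w i) (nth 0 w j) (nth 0 w k).
Proof.
rewrite occP /pat321 => /and5P[ij jk kw -> ->].
by rewrite [X in subseq _ X](glue_cut ij jk kw) subseq_glue.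
Qed.

Lemma subseq_consP (x : nat) (s w : seq nat) : subseq (x :: s) w ->
  exists2 i, i < size w & nth 0 w i = x /\ subseq s (drop i.+1 w).
Proof.
elim: w => //= y w IHw; case: eqP => [-> sw | _ /IHw[i iw [wi sw]]].
  by exists 0; rewrite // drop0.
by exists i.+1.
Qed.

Lemma pat_occ (w : seq nat) x y z : pat321 w x y z ->
  exists i j k, (i, j, k) \in occ321 w /\
    [/\ nth 0 w i = x, nth 0 w j = y & nth 0 w k = z].
Proof.
case/and3P=> zy yx /subseq_consP[i iw [wi /subseq_consP[j jw [wj]]]].
rewrite drop_drop => /subseq_consP[k kw [wk _]].
rewrite size_drop in jw; rewrite size_drop in kw; rewrite !nth_drop in wj wk.
exists i, (i.+1 + j), (j.+1 + i.+1 + k); rewrite occP wi wj wk zy yx {wi wj wk}.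
by split => //; apply/and5P; split => //; lia.
Qed.

Lemma avoids321P (w : seq nat) : reflect (forall x y z, ~~ pat321 w x y z) (avoids321 w).
Proof.
apply: (iffP eqP) => [e x y z | noP].
  by apply/negP => /pat_occ[i [j [k [+ _]]]]; rewrite e.
case e: (occ321 w) => [|[[i j] k] s] //.
have /occ_pat : (i, j, k) \in occ321 w by rewrite e mem_head.
by rewrite (negbTE (noP _ _ _)).
Qed.

Lemma once321P (w : seq nat) i j k : uniq w ->
  occ321 w = [:: (i, j, k)] <->
  (i, j, k) \in occ321 w /\
  (forall x y z, pat321 w x y z -> (x, y, z) = (nth 0 w i, nth 0 w j, nth 0 w k)).
Proof.
move=> uw; split => [e | [ijk onlyP]].
  rewrite e mem_head; split => // x y z /pat_occ[i' [j' [k' [+ [<- <- <-]]]]].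
  by rewrite e inE => /eqP[-> -> ->].
have allE (t : nat * nat * nat) : t \in occ321 w -> t = (i, j, k).
  case: t => [[i' j'] k'] t_occ; have := onlyP _ _ _ (occ_pat t_occ).
  move: t_occ ijk; rewrite !occP => /and5P[? ? ? _ _] /and5P[? ? ? _ _].
  have [? ? ? ?] : [/\ i' < size w, j' < size w, i < size w & j < size w] by split; lia.
  by case=> /eqP + /eqP + /eqP; rewrite !nth_uniq // => /eqP-> /eqP-> /eqP->.
have := occ321_uniq w; case e: (occ321 w) ijk allE => [|t [|t' s]] //.
  by rewrite inE => /eqP <-.
move=> _ allE; rewrite (allE t) ?mem_head // (allE t') ?inE ?eqxx ?orbT //.
by rewrite /= inE eqxx.
Qed.

Lemma map_glue (f : nat -> nat) q1 q2 q3 q4 x y z :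
  {in q1 ++ q2 ++ q3 ++ q4, f =1 id} ->
  map f (glue q1 q2 q3 q4 x y z) = glue q1 q2 q3 q4 (f x) (f y) (f z).
Proof.
move=> fid; rewrite /glue !(map_cat, map_cons).
by congr (_ ++ _ :: _ ++ _ :: _ ++ _ :: _); apply: map_id_in => v vq;
  rewrite fid // !mem_cat vq ?orbT.
Qed.

Section GluedWord.

Variables (p1 p2 p3 p4 : seq nat) (c b a : nat).

Local Notation W := (glue p1 p2 p3 p4 c b a).
Local Notation L := (p1 ++ c :: p2).
Local Notation R := (p3 ++ a :: p4).

Lemma glue_pivot : W = L ++ b :: R.
Proof. by rewrite /glue -catA. Qed.

Lemma perm_glue : perm_eq W (c :: b :: a :: p1 ++ p2 ++ p3 ++ p4).
Proof. by apply/permP => P; rewrite /glue /= !count_cat /= !count_cat /= !count_cat /=; lia. Qed.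

Hypothesis uniqW : uniq W.

Lemma glue_distinct :
  {in p1 ++ p2 ++ p3 ++ p4, forall v, [/\ v != c, v != b & v != a]}.
Proof.
move: uniqW; rewrite (perm_uniq perm_glue) /= !inE !negb_or.
case/and4P=> /and3P[_ _ cP] /andP[_ bP] aP _ v vP.
by split; apply/eqP => e; [move: cP | move: bP | move: aP]; rewrite -e vP.
Qed.

Lemma b_outside : [/\ b \notin L, b \notin R & {in b :: R, forall v, v \notin L}].
Proof.
move: uniqW; rewrite glue_pivot cat_uniq => /and3P[_ /hasPn disj /andP[bR _]].
by split => //; apply: disj; rewrite mem_head.
Qed.

Hypotheses (ab : a < b) (bc : b < c).

Lemma pat_through_b x z : x \in L -> z \in R -> z < b -> b < x -> pat321 W x b z.
Proof.
move=> xL zR zb bx; rewrite /pat321 zb bx glue_pivot.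
by rewrite (uniq_subseq_pivot [:: x] [:: z]) -?glue_pivot // !sub1seq xL zR.
Qed.

Lemma blocks_of_unique :
  (forall x y z, pat321 W x y z -> (x, y, z) = (c, b, a)) ->
  {in p1 ++ p2, forall v, v < b} /\ {in p3 ++ p4, forall v, b < v}.
Proof.
move=> onlyP; split=> v vP; have vP' : v \in p1 ++ p2 ++ p3 ++ p4.
- by move: vP; rewrite !mem_cat => /orP[] ->; rewrite ?orbT.
- have [vc vb _] := glue_distinct vP'; case: ltngtP vb => // bv _.
  have vL : v \in L by move: vP; rewrite !mem_cat inE => /orP[] ->; rewrite ?orbT.
  have aR : a \in R by rewrite mem_cat mem_head orbT.
  by case: (onlyP _ _ _ (pat_through_b vL aR ab bv)) => e; rewrite e eqxx in vc.
- by move: vP; rewrite !mem_cat => /orP[] ->; rewrite ?orbT.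
- have [_ vb va] := glue_distinct vP'; case: ltngtP vb => // vb' _.
  have vR : v \in R by move: vP; rewrite !mem_cat inE => /orP[] ->; rewrite ?orbT.
  have cL : c \in L by rewrite mem_cat mem_head orbT.
  by case: (onlyP _ _ _ (pat_through_b cL vR vb' bc)) => e; rewrite e eqxx in va.
Qed.

Hypotheses (small : {in p1 ++ p2, forall v, v < b}) (large : {in p3 ++ p4, forall v, b < v}).

Lemma block_bounds : [/\ {in p1, forall v, v < b}, {in p2, forall v, v < b},
  {in p3, forall v, b < v} & {in p4, forall v, b < v}].
Proof.
by split=> v vp; [apply: small | apply: small | apply: large | apply: large];
  rewrite mem_cat vp ?orbT.
Qed.

Lemma left_word_filter :
  left_word p1 p2 b a = filter (fun v => v <= b) (map (transp b c) W).
Proof.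
rewrite map_glue => [|v /glue_distinct[vc vb _]]; last by rewrite transp_id.
rewrite transpL transpR transp_id; try lia.
have [s1 s2 l3 l4] := block_bounds.
have keep s : {in s, forall v, v < b} -> [seq v <- s | v <= b] = s.
  by move=> sb; apply: filter_in_all => v /sb/ltnW.
have discard s : {in s, forall v, b < v} -> [seq v <- s | v <= b] = [::].
  by move=> sb; apply: filter_in_none => v /sb; rewrite ltnNge.
rewrite /glue; do !rewrite filter_cat /=.
rewrite leqnn (leqNgt c b) bc (ltnW ab) /=.
by rewrite (keep p1) // (keep p2) // (discard p3) // (discard p4).
Qed.

Lemma right_word_filter :
  right_word p3 p4 c b = filter (fun v => b <= v) (map (transp a b) W).
Proof.
rewrite map_glue => [|v /glue_distinct[_ vb va]]; last by rewrite transp_id.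
rewrite transpL transpR transp_id; try lia.
have [s1 s2 l3 l4] := block_bounds.
have keep s : {in s, forall v, b < v} -> [seq v <- s | b <= v] = s.
  by move=> sb; apply: filter_in_all => v /sb/ltnW.
have discard s : {in s, forall v, v < b} -> [seq v <- s | b <= v] = [::].
  by move=> sb; apply: filter_in_none => v /sb; rewrite ltnNge.
rewrite /glue; do !rewrite filter_cat /=.
rewrite leqnn (ltnW bc) (leqNgt b a) ab /=.
by rewrite (discard p1) // (discard p2) // (keep p3) // (keep p4).
Qed.

Lemma pat_left_word x y z :
  pat321 (left_word p1 p2 b a) x y z =
  [&& z < y, y < x, [&& x <= b, y <= b & z <= b]
    & subseq [:: transp b c x; transp b c y; transp b c z] W].
Proof. by rewrite /pat321 left_word_filter (subseq_filter_map _ _ _ (transpK b c)) /= andbT. Qed.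

Lemma pat_right_word x y z :
  pat321 (right_word p3 p4 c b) x y z =
  [&& z < y, y < x, [&& b <= x, b <= y & b <= z]
    & subseq [:: transp a b x; transp a b y; transp a b z] W].
Proof. by rewrite /pat321 right_word_filter (subseq_filter_map _ _ _ (transpK a b)) /= andbT. Qed.

Definition region (v : nat) : nat := if v \in L then 0 else if v == b then 1 else 2.

Lemma region_mono u v : subseq [:: u; v] W -> region u <= region v.
Proof.
move=> uv; have [bL bR disj] := b_outside.
rewrite /region; case: ifPn => // uL.
have ubR : u \in b :: R.
  by move: (mem_subseq uv (mem_head _ _)); rewrite glue_pivot mem_cat (negbTE uL).
have [_ vL] : v \in b :: R /\ v \notin L.
  by apply: subseq_pair_suffix ubR; rewrite -glue_pivot.
rewrite (negbTE vL); case: (u =P b) => [_|ub]; first by case: (v =P b).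
have uR : u \in R by move: ubR; rewrite inE => /predU1P[].
have eW : W = (L ++ [:: b]) ++ R by rewrite /glue -!catA.
have [vR _] : v \in R /\ v \notin L ++ [:: b].
  by apply: subseq_pair_suffix uR; rewrite -eW.
by case: (v =P b) => // vb; rewrite -vb vR in bR.
Qed.

Lemma region_cases v : v \in W ->
  (region v = 0 /\ (v < b \/ v = c)) \/ (region v = 1 /\ v = b) \/
  (region v = 2 /\ (b < v \/ v = a)).
Proof.
have [bL bR disj] := b_outside; have [s1 s2 l3 l4] := block_bounds.
rewrite glue_pivot mem_cat inE /region => /or3P[vL | /eqP-> | vR].
- left; split; first by rewrite vL.
  by move: vL; rewrite mem_cat inE => /or3P[/s1|/eqP|/s2]; auto.
- by right; left; rewrite (negbTE bL) eqxx.
- right; right; rewrite (negbTE (disj v _)) ?inE ?vR ?orbT //.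
  have vb : v != b by apply: contraNneq bR => <-.
  split; first by rewrite (negbTE vb).
  by move: vR; rewrite mem_cat inE => /or3P[/l3|/eqP|/l4]; auto.
Qed.

Lemma transp_below v : v < b -> transp b c v = v.
Proof. by move=> vb; rewrite transp_id // ?neq_ltn ?vb ?(ltn_trans vb bc). Qed.

Lemma transp_above v : b < v -> transp a b v = v.
Proof. by move=> bv; rewrite transp_id // ?neq_ltn ?bv ?(ltn_trans ab bv) ?orbT. Qed.

(* If (c, b, a) is the only 321 of W, both halves avoid 321: a 321 x y z of
   sigma1 yields the 321 (transp b c x) y z of W, and a 321 x y z of sigma2
   yields the 321 x y (transp a b z) of W, neither with middle letter b. *)
Lemma avoid_of_unique :
  (forall x y z, pat321 W x y z -> (x, y, z) = (c, b, a)) ->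
  avoids321 (left_word p1 p2 b a) /\ avoids321 (right_word p3 p4 c b).
Proof.
move=> onlyP; split; apply/avoids321P => x y z; apply/negP.
  rewrite pat_left_word => /and4P[zy yx /and3P[xb _ _]].
  rewrite (transp_below (v := y)) ?(transp_below (v := z)); try lia; move=> sW.
  have yx' : y < transp b c x.
    have [xb' | ->] : x < b \/ x = b by lia.
      by rewrite transp_below.
    by rewrite transpL; lia.
  have pW : pat321 W (transp b c x) y z by rewrite /pat321 zy yx'.
  by case: (onlyP _ _ _ pW) => _ yb' _; lia.
rewrite pat_right_word => /and4P[zy yx /and3P[_ _ bz]].
rewrite (transp_above (v := x)) ?(transp_above (v := y)); try lia; move=> sW.
have zy' : transp a b z < y.
  have [bz' | <-] : b < z \/ b = z by lia.
    by rewrite transp_above.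
  by rewrite transpR; lia.
have pW : pat321 W x y (transp a b z) by rewrite /pat321 zy' yx.
by case: (onlyP _ _ _ pW) => _ yb' _; lia.
Qed.

(* Avoidance of sigma1 excludes y < b with x < b or x = c,
   avoidance of sigma2 excludes b < y with b < z or z = a, and the regions
   of x, y, z increase; the only case left is x = c, y = b, z = a. *)
Lemma unique_of_avoid :
  avoids321 (left_word p1 p2 b a) -> avoids321 (right_word p3 p4 c b) ->
  forall x y z, pat321 W x y z -> (x, y, z) = (c, b, a).
Proof.
move=> /avoids321P noL /avoids321P noR x y z /and3P[zy yx sW].
have notL : ~ (y < b /\ (x < b \/ x = c)).
  case=> yb hx; have : pat321 (left_word p1 p2 b a) (transp b c x) y z.
    rewrite pat_left_word transpK (transp_below (v := y)) // (transp_below (v := z));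
      rewrite ?sW ?zy ?andbT; try lia.
    by case: hx => [xb | ->]; rewrite ?transpR ?transp_below //;
      repeat (apply/andP; split); lia.
  by rewrite (negbTE (noL _ _ _)).
have notR : ~ (b < y /\ (b < z \/ z = a)).
  case=> by' hz; have : pat321 (right_word p3 p4 c b) x y (transp a b z).
    rewrite pat_right_word transpK (transp_above (v := x)) ?(transp_above (v := y));
      rewrite ?sW ?yx ?andbT; try lia.
    by case: hz => [bz | ->]; rewrite ?transpL ?transp_above //;
      repeat (apply/andP; split); lia.
  by rewrite (negbTE (noR _ _ _)).
have sxy : subseq [:: x; y] W := subseq_trans (prefix_subseq [:: x; y] [:: z]) sW.
have syz : subseq [:: y; z] W := subseq_trans (suffix_subseq [:: x] [:: y; z]) sW.
have [xW yW zW] : [/\ x \in W, y \in W & z \in W].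
  by split; apply: (mem_subseq sW); rewrite !inE eqxx ?orbT.
suff: x = c /\ y = b /\ z = a by case=> -> [-> ->].
move: (region_mono sxy) (region_mono syz) (region_cases xW) (region_cases yW) (region_cases zW).
lia.
Qed.

Lemma glued_perms n : perm_eq W (iota 1 n) ->
  perm_eq (left_word p1 p2 b a) (iota 1 b) /\
  perm_eq (right_word p3 p4 c b) (iota b (n - b + 1)).
Proof.
move=> Wn; have memW v : (v \in W) = (0 < v <= n) by rewrite (perm_mem Wn) mem_iota; lia.
have [aW bW cW] : [/\ a \in W, b \in W & c \in W].
  by split; rewrite /glue !(mem_cat, inE) !eqxx !orbT.
have bn : b <= n by move: bW; rewrite memW => /andP[].
have tinj u v : injective (transp u v) := can_inj (transpK u v).
split; apply: uniq_perm; rewrite ?iota_uniq //.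
- by rewrite left_word_filter filter_uniq // map_inj_uniq.
- by move=> v; rewrite left_word_filter mem_filter mem_map_transp // memW mem_iota; lia.
- by rewrite right_word_filter filter_uniq // map_inj_uniq.
- by move=> v; rewrite right_word_filter mem_filter mem_map_transp // memW mem_iota; lia.
Qed.

End GluedWord.

Lemma left_word_range p1 p2 b a : perm_eq (left_word p1 p2 b a) (iota 1 b) ->
  {in p1 ++ p2, forall v, v < b} /\ a < b.
Proof.
move=> P1; have /pivot_notin bP : uniq (left_word p1 p2 b a) by rewrite (perm_uniq P1) iota_uniq.
have below v : v \in left_word p1 p2 b a -> v != b -> v < b.
  by rewrite (perm_mem P1) mem_iota => ? ?; lia.
split=> [v vP|]; apply: below.
- by move: vP; rewrite /left_word !(mem_cat, inE) => /orP[] ->; rewrite ?orbT.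
- by apply: contraNneq bP => <-; move: vP; rewrite !mem_cat => /orP[] ->; rewrite ?orbT.
- by rewrite /left_word !(mem_cat, inE) eqxx !orbT.
- by apply: contraNneq bP => <-; rewrite !(mem_cat, inE) eqxx !orbT.
Qed.

Lemma right_word_range n p3 p4 c b : perm_eq (right_word p3 p4 c b) (iota b (n - b + 1)) ->
  c != b -> {in p3 ++ p4, forall v, b < v} /\ b < c.
Proof.
move=> P2 cb; have /andP[_ /pivot_notin bP] : uniq (right_word p3 p4 c b).
  by rewrite (perm_uniq P2) iota_uniq.
have above v : v \in right_word p3 p4 c b -> v != b -> b < v.
  by rewrite (perm_mem P2) mem_iota => ? ?; lia.
split=> [v vP|]; apply: above => //; last by rewrite mem_head.
- by rewrite inE mem_cat inE; move: vP; rewrite mem_cat => /orP[] ->; rewrite ?orbT.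
- by apply: contraNneq bP => <-.
Qed.

Lemma glue_perm n p1 p2 p3 p4 c b a : 0 < b <= n ->
  perm_eq (left_word p1 p2 b a) (iota 1 b) ->
  perm_eq (right_word p3 p4 c b) (iota b (n - b + 1)) ->
  perm_eq (glue p1 p2 p3 p4 c b a) (iota 1 n).
Proof.
move=> /andP[b0 bn] P1 P2; rewrite -(perm_cons b).
have split_iota : iota 1 n = iota 1 b.-1 ++ iota b (n - b + 1).
  by rewrite {1}(_ : n = b.-1 + (n - b + 1)) ?iotaD ?add1n ?prednK //; lia.
have iota_b : iota 1 b = iota 1 b.-1 ++ [:: b].
  by rewrite {1}(_ : b = b.-1 + 1) ?iotaD ?add1n ?prednK //; lia.
apply: perm_trans (_ : perm_eq _ (left_word p1 p2 b a ++ right_word p3 p4 c b)) _.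
  apply/permP => P; rewrite /glue /left_word /right_word /=.
  by rewrite !count_cat /= !count_cat /= !count_cat /=; lia.
apply: perm_trans (perm_cat P1 P2) _; rewrite split_iota iota_b -catA /= perm_sym.
by rewrite -cat1s perm_catCA.
Qed.

Lemma pivot_cut (u v : seq nat) x :
  [/\ nth 0 (u ++ x :: v) (size u) = x, take (size u) (u ++ x :: v) = u
    & drop (size u).+1 (u ++ x :: v) = v].
Proof.
by rewrite nth_cat ltnn subnn take_size_cat // -cat_rcons drop_size_cat ?size_rcons.
Qed.

Lemma glue_positions p1 p2 p3 p4 c b a
    (i := size p1) (j := (size p1 + size p2).+1) (k := (size p1 + size p2 + size p3).+2)
    (W := glue p1 p2 p3 p4 c b a) :
  [/\ (i, j, k) \in occ321 W = (a < b < c),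
      (nth 0 W i, nth 0 W j, nth 0 W k) = (c, b, a),
      sigma1 W i j k = left_word p1 p2 b a & sigma2 W i j k = right_word p3 p4 c b].
Proof.
have eW1 : W = p1 ++ c :: (p2 ++ b :: p3 ++ a :: p4) by [].
have eW2 : W = (p1 ++ c :: p2) ++ b :: (p3 ++ a :: p4) by rewrite /W /glue -catA.
have eW3 : W = (p1 ++ c :: p2 ++ b :: p3) ++ a :: p4 by rewrite /W /glue -catA /= -catA.
have [sz2 sz3] : size (p1 ++ c :: p2) = j /\ size (p1 ++ c :: p2 ++ b :: p3) = k.
  by rewrite /j /k !size_cat /= !size_cat /=; split; lia.
have [c_i take_i drop_i] := pivot_cut p1 (p2 ++ b :: p3 ++ a :: p4) c.
have [b_j _ drop_j] := pivot_cut (p1 ++ c :: p2) (p3 ++ a :: p4) b.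
have [a_k _ drop_k] := pivot_cut (p1 ++ c :: p2 ++ b :: p3) p4 a.
rewrite -eW1 in c_i take_i drop_i; rewrite -eW2 sz2 in b_j drop_j; rewrite -eW3 sz3 in a_k drop_k.
have slice_ij : slice W i.+1 j = p2.
  by rewrite /slice drop_i (_ : j - i.+1 = size p2) ?take_size_cat //; lia.
have slice_jk : slice W j.+1 k = p3.
  by rewrite /slice drop_j (_ : k - j.+1 = size p3) ?take_size_cat //; lia.
have kW : k < size W by rewrite eW3 size_cat sz3 /=; lia.
rewrite occP /sigma1 /sigma2 c_i b_j a_k kW take_i slice_ij slice_jk drop_k.
have [-> ->] : i < j /\ j < k by rewrite /i /j /k; split; lia.
by split => //=; rewrite andbC.
Qed.

Lemma glue_inj p1 p2 p3 p4 c b a q1 q2 q3 q4 c' a' :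
  uniq (left_word p1 p2 b a) -> uniq (right_word p3 p4 c b) ->
  left_word p1 p2 b a = left_word q1 q2 b a' ->
  right_word p3 p4 c b = right_word q3 q4 c' b ->
  glue p1 p2 p3 p4 c b a = glue q1 q2 q3 q4 c' b a'.
Proof.
rewrite /left_word /right_word => u1 /= /andP[_ u2] /eqP e1 [ec /eqP e2].
move: e1 e2; rewrite !uniq_eqseq_pivotl // => /andP[/eqP-> /eqP e12] /andP[/eqP-> /eqP->].
by move: e12; rewrite ec !cats1 => /rcons_inj[-> ->].
Qed.

(* In a permutation with the single 321 occurrence (i, j, k), every other
   entry left of position j is smaller than pi_j and every other entry right
   of it is larger: otherwise it would form a second occurrence with j. *)
Lemma values_around_b n (pi : seq nat) i j k :
  perm_eq pi (iota 1 n) -> occ321 pi = [:: (i, j, k)] ->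
  (forall p, p < j -> p != i -> nth 0 pi p < nth 0 pi j) /\
  (forall p, j < p < n -> p != k -> nth 0 pi j < nth 0 pi p).
Proof.
move=> hp ho; have up : uniq pi by rewrite (perm_uniq hp) iota_uniq.
have szp : size pi = n by rewrite (perm_size hp) size_iota.
have : (i, j, k) \in occ321 pi by rewrite ho mem_head.
rewrite occP => /and5P[ij jk kn bc ab].
have onlyOcc p q r : (p, q, r) \in occ321 pi -> [/\ p = i, q = j & r = k].
  by rewrite ho inE => /eqP[-> -> ->].
have jn : j < size pi by lia.
split=> [p pj pNi | p /andP[jp pn] pNk]; have pn' : p < size pi by lia.
  case: (ltngtP (nth 0 pi p) (nth 0 pi j)) => // [bp | /eqP].
    have /onlyOcc[pi' _ _] : (p, j, k) \in occ321 pi by rewrite occP pj jk kn bp ab.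
    by rewrite pi' eqxx in pNi.
  by rewrite nth_uniq // => /eqP pj'; lia.
case: (ltngtP (nth 0 pi j) (nth 0 pi p)) => // [pb | /eqP].
  have /onlyOcc[_ _ pk] : (i, j, p) \in occ321 pi by rewrite occP ij jp pn' bc pb.
  by rewrite pk eqxx in pNk.
by rewrite nth_uniq // => /eqP jp'; lia.
Qed.

Lemma halves_of_unique n (pi : seq nat) i j k :
  perm_eq pi (iota 1 n) -> occ321 pi = [:: (i, j, k)] ->
  [/\ perm_eq (sigma1 pi i j k) (iota 1 (nth 0 pi j)), avoids321 (sigma1 pi i j k),
      perm_eq (sigma2 pi i j k) (iota (nth 0 pi j) (n - nth 0 pi j + 1)),
      avoids321 (sigma2 pi i j k) &
      last 0 (sigma1 pi i j k) != nth 0 pi j /\ head 0 (sigma2 pi i j k) != nth 0 pi j].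
Proof.
move=> hp ho; have up : uniq pi by rewrite (perm_uniq hp) iota_uniq.
have [ijk onlyP] := (once321P i j k up).1 ho.
move: ijk; rewrite occP => /and5P[ij jk kn bc ab].
move: (glue_cut ij jk kn); set W := glue _ _ _ _ _ _ _ => eW.
have uW : uniq W by rewrite -eW.
have onlyW x y z : pat321 W x y z -> (x, y, z) = (nth 0 pi i, nth 0 pi j, nth 0 pi k).
  by rewrite -eW => /onlyP.
have [small large] := blocks_of_unique uW ab bc onlyW.
have [A1 A2] := avoid_of_unique uW ab bc small large onlyW.
have Wn : perm_eq W (iota 1 n) by rewrite -eW.
have [P1 P2] := glued_perms uW ab bc small large Wn.
split => //; split.
- by rewrite /sigma1 !last_cat /= neq_ltn ab.
- by rewrite /sigma2 /= neq_ltn bc orbT.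
Qed.

Lemma unique_occurrence_split n (pi : seq nat) i j k :
  perm_eq pi (iota 1 n) -> occ321 pi = [:: (i, j, k)] ->
  let b := nth 0 pi j in
  let s1 := sigma1 pi i j k in
  let s2 := sigma2 pi i j k in
  (forall p, p < j -> p != i -> nth 0 pi p < b) /\
  (forall p, j < p < n -> p != k -> b < nth 0 pi p) /\
  (perm_eq s1 (iota 1 b) /\ avoids321 s1 /\ last 0 s1 != b) /\
  (perm_eq s2 (iota b (n - b + 1)) /\ avoids321 s2 /\ head 0 s2 != b).
Proof.
move=> hp ho; have [lo hi] := values_around_b hp ho.
by have [P1 A1 P2 A2 [L1 H2]] := halves_of_unique hp ho.
Qed.

Lemma phi_triple_ok n pi : once321_perm n pi -> triple_ok n (phi pi).
Proof.
case=> hp; rewrite /once321; case ho: (occ321 pi) => [|[[i j] k] []] // _.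
have [P1 A1 P2 A2 [L1 H2]] := halves_of_unique hp ho.
rewrite /phi ho; split => //.
have : (i, j, k) \in occ321 pi by rewrite ho mem_head.
rewrite occP => /and5P[ij jk kn bc ab].
have iP : i < size pi by lia.
have [aP cP] : nth 0 pi k \in iota 1 n /\ nth 0 pi i \in iota 1 n.
  by rewrite -!(perm_mem hp) !mem_nth.
by move: aP cP; rewrite !mem_iota; lia.
Qed.

Lemma once321_glue n pi : once321_perm n pi ->
  exists p1 p2 p3 p4 c b a, [/\ pi = glue p1 p2 p3 p4 c b a,
    phi pi = (b, left_word p1 p2 b a, right_word p3 p4 c b),
    uniq (left_word p1 p2 b a) & uniq (right_word p3 p4 c b)].
Proof.
case=> hp; rewrite /once321; case ho: (occ321 pi) => [|[[i j] k] []] // _.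
have [P1 _ P2 _ _] := halves_of_unique hp ho.
have : (i, j, k) \in occ321 pi by rewrite ho mem_head.
rewrite occP => /and5P[ij jk kn _ _].
do 7 eexists; split; first exact: glue_cut ij jk kn.
- by rewrite /phi ho.
- by rewrite (perm_uniq P1) iota_uniq.
- by rewrite (perm_uniq P2) iota_uniq.
Qed.

Lemma phi_injective n pi pi' : once321_perm n pi -> once321_perm n pi' ->
  phi pi = phi pi' -> pi = pi'.
Proof.
move=> /once321_glue[p1 [p2 [p3 [p4 [c [b [a [-> -> u1 u2]]]]]]]].
move=> /once321_glue[q1 [q2 [q3 [q4 [c' [b' [a' [-> -> _ _]]]]]]]].
by case=> <- e1 ec e2; apply: glue_inj u1 u2 e1 _; rewrite /right_word ec e2.
Qed.

Lemma phi_surjective n t : triple_ok n t -> exists pi, once321_perm n pi /\ phi pi = t.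
Proof.
case: t => [[b s1] s2] [/andP[b2 bn] [P1 A1 L1] [P2 A2 H2]].
have bs1 : b \in s1 by rewrite (perm_mem P1) mem_iota; lia.
have bs2 : b \in s2 by rewrite (perm_mem P2) mem_iota; lia.
case/splitPr: bs1 P1 A1 L1 => p1 q; case/lastP: q => [|p2 a].
  by move=> _ _; rewrite last_cat eqxx.
rewrite -cats1 => P1 A1 _.
case: s2 bs2 P2 A2 H2 => [//|c r]; rewrite inE eq_sym => /predU1P[].
  by move=> -> _ _; rewrite eqxx.
case/splitPr => p3 p4 P2 A2 cb.
have [small ab] := left_word_range P1.
have [large bc] := right_word_range P2 cb.
have Wn : perm_eq (glue p1 p2 p3 p4 c b a) (iota 1 n) by apply: glue_perm P1 P2; lia.
have uW : uniq (glue p1 p2 p3 p4 c b a) by rewrite (perm_uniq Wn) iota_uniq.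
have onlyW := unique_of_avoid uW ab bc small large A1 A2.
have [occ_ijk nth_ijk s1E s2E] := glue_positions p1 p2 p3 p4 c b a.
have ho : occ321 (glue p1 p2 p3 p4 c b a) =
    [:: (size p1, (size p1 + size p2).+1, (size p1 + size p2 + size p3).+2)].
  by apply/once321P => //; rewrite occ_ijk ab bc nth_ijk; split.
exists (glue p1 p2 p3 p4 c b a); split; first by split; rewrite // /once321 ho.
by case: nth_ijk => _ b_j _; rewrite /phi ho /= b_j s1E s2E.
Qed.

Theorem mainTheorem2 (n : nat) (hn : 3 <= n) :
  (forall (pi : seq nat) (i j k : nat),
      perm_eq pi (iota 1 n) -> occ321 pi = [:: (i, j, k)] ->
      let b := nth 0 pi j in
      let s1 := sigma1 pi i j k in
      let s2 := sigma2 pi i j k in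
      (forall p, p < j -> p != i -> nth 0 pi p < b) /\
      (forall p, j < p < n -> p != k -> b < nth 0 pi p) /\
      (perm_eq s1 (iota 1 b) /\ avoids321 s1 /\ last 0 s1 != b) /\
      (perm_eq s2 (iota b (n - b + 1)) /\ avoids321 s2 /\ head 0 s2 != b)) /\
  (forall pi, once321_perm n pi -> triple_ok n (phi pi)) /\
  (forall pi pi', once321_perm n pi -> once321_perm n pi' ->
      phi pi = phi pi' -> pi = pi') /\
  (forall t, triple_ok n t -> exists pi, once321_perm n pi /\ phi pi = t).
Proof.
split; first exact: unique_occurrence_split.
split; first exact: phi_triple_ok.
split; first exact: phi_injective.
exact: phi_surjective.
Qed.
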